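(* Let $\mathcal{K}^{\langle\infty\rangle}$ be a planar unbounded simple nested fractal whose number of essential fixed points is $k=3$. Then $\mathcal{K}^{\langle\infty\rangle}$ has the good labelling property.
   Context: Setting: $L>1$, $N\ge2$, $\nu_1=0,\dots,\nu_N\in\mathbb{R}^2$, $\Psi_i(x)=x/L+\nu_i$, and $\mathcal{K}^{\langle 0\rangle}=\bigcup_i\Psi_i(\mathcal{K}^{\langle 0\rangle})$ is a planar simple nested fractal (essential fixed points $V_0^{\langle0\rangle}$: fixed points $x$ for which there are another fixed point $y$ and $\Psi_i\ne\Psi_j$ with $\Psi_i(x)=\Psi_j(y)$; open set condition, nesting, symmetry with respect to perpendicular bisectors of pairs of essential fixed points, connectivity); $k=\#V_0^{\langle0\rangle}$, and $V_0^{\langle0\rangle}$ spans a regular $k$-gon. $\mathcal{K}^{\langle M\rangle}=L^M\mathcal{K}^{\langle 0\rangle}$, $\mathcal{K}^{\langle\infty\rangle}=\bigcup_{M\ge0}\mathcal{K}^{\langle M\rangle}$. An $M$-complex is $\Delta_M=\mathcal{K}^{\langle M\rangle}+\nu_{\Delta_M}$ with $\nu_{\Delta_M}=\sum_{j=M+1}^{J}L^j\nu_{i_j}$ ($J\ge M+1$), vertex set $V(\Delta_M)=L^MV_0^{\langle0\rangle}+\nu_{\Delta_M}$; $V_M^{\langle M\rangle}=L^MV_0^{\langle0\rangle}$ and $V_M^{\langle\infty\rangle}$ is the union of all $V(\Delta_M)$. With $\mathcal{A}$ an alphabet of $k$ symbols and $\mathcal{R}_M$ the $k$ rotations about the barycenter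 of $\mathcal{K}^{\langle M\rangle}$ preserving $V_M^{\langle M\rangle}$, a good labelling function of order $M$ is $\ell_M:V_M^{\langle\infty\rangle}\to\mathcal{A}$, bijective on $V_M^{\langle M\rangle}$, such that for each $M$-complex $\Delta_M=\mathcal{K}^{\langle M\rangle}+\nu_{\Delta_M}$ there is $R_{\Delta_M}\in\mathcal{R}_M$ with $\ell_M(v)=\ell_M(R_{\Delta_M}(v-\nu_{\Delta_M}))$, $v\in V(\Delta_M)$. The good labelling property means that a good labelling function of some order $M\in\mathbb{Z}$ exists. *)

From mathcomp Require Import all_boot all_algebra.
From mathcomp Require Import all_classical all_reals all_analysis.
Set Implicit Arguments. Unset Strict Implicit. Unset Printing Implicit Defensive.
Import GRing.Theory Num.Theory numFieldNormedType.Exports.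
Local Open Scope classical_set_scope.
Local Open Scope ring_scope.

Section NestedFractal.
Variable R : realType.
Notation pt := (R * R)%type.

(* ---------- the IFS  Psi_i(x) = x/L + nu_i,  i = 0..N-1  (paper: 1..N) ---------- *)
Variables (L : R) (N : nat) (nu : nat -> pt).

Definition Psi (i : nat) (x : pt) : pt := L^-1 *: x + nu i.

Definition psiw (w : seq nat) (x : pt) : pt := foldr Psi x w.

Definition word (n : nat) (w : seq nat) : Prop :=
  size w = n /\ all (fun i => (i < N)%N) w.

Definition fixed_points : set pt :=
  [set x | exists i, (i < N)%N /\ Psi i x = x].

Definition essential_fixed_points : set pt :=
  [set x | fixed_points x /\
     exists y, fixed_points y /\
       exists i j, [/\ (i < N)%N, (j < N)%N, Psi i <> Psi j & Psi i x = Psi j y]].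

Definition is_attractor (K : set pt) : Prop :=
  [/\ compact K, K !=set0 &
      K = \bigcup_(i in [set i : nat | (i < N)%N]) (Psi i @` K)].

Definition open_set_condition : Prop :=
  exists U : set pt,
    [/\ open U, U !=set0,
        (exists r : R, forall x, U x -> `|x.1| <= r /\ `|x.2| <= r),
        (forall i, (i < N)%N -> Psi i @` U `<=` U) &
        (forall i j, (i < N)%N -> (j < N)%N -> i <> j ->
           Psi i @` U `&` Psi j @` U = set0)].

Definition Vn (V0 : set pt) (n : nat) : set pt :=
  [set z | exists w, word n w /\ exists x, V0 x /\ z = psiw w x].

Definition nesting (K V0 : set pt) : Prop :=
  forall n w v, word n w -> word n v -> w <> v ->
    psiw w @` K `&` psiw v @` K = psiw w @` V0 `&` psiw v @` V0.

Definition dotp (p q : pt) : R := p.1 * q.1 + p.2 * q.2.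

Definition bisector_reflection (x y z : pt) : pt :=
  let m := 2^-1 *: (x + y) in
  let d := y - x in
  z - ((2 * dotp (z - m) d) / dotp d d) *: d.

Definition symmetry (V0 : set pt) : Prop :=
  forall x y, V0 x -> V0 y -> x <> y ->
    forall n, bisector_reflection x y @` Vn V0 n = Vn V0 n.

Definition connectivity (K : set pt) : Prop :=
  forall i j, (i < N)%N -> (j < N)%N ->
    exists (m : nat) (c : nat -> nat),
      [/\ c 0%N = i, c m = j, (forall l, (l <= m)%N -> (c l < N)%N) &
          forall l, (l < m)%N -> (Psi (c l) @` K `&` Psi (c l.+1) @` K) !=set0].

Definition planar_simple_nested_fractal (K : set pt) : Prop :=
  [/\ 1 < L, (2 <= N)%N, nu 0%N = 0 & is_attractor K] /\
  [/\ open_set_condition,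
      nesting K essential_fixed_points,
      symmetry essential_fixed_points & connectivity K].

(* nu_{Delta_M} = sum_{j=M+1}^{J} L^j nu_{i_j}, J >= M+1;
   written with j = M+1+n, n = 0..m-1, m = J - M >= 1 *)
Definition complex_shift (M : int) (s : pt) : Prop :=
  exists (m : nat) (w : nat -> nat),
    [/\ (0 < m)%N, (forall n, (n < m)%N -> (w n < N)%N) &
        s = \sum_(n < m) (L ^ (M + 1 + (n%:Z))) *: nu (w n)].

Variable vs : seq pt. (* an enumeration of V_0^<0>;  k = size vs *)

Definition V0s : set pt := [set` vs].

Definition VMM (M : int) : set pt := [set (L ^ M) *: x | x in V0s].

Definition complex_vertices (M : int) (s : pt) : set pt :=
  [set (L ^ M) *: x + s | x in V0s].

Definition VMinf (M : int) : set pt :=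
  [set v | exists s, complex_shift M s /\ complex_vertices M s v].

(* barycenter of the k-gon V_M^<M> (= barycenter of K^<M>) *)
Definition barycenter (M : int) : pt :=
  (size vs)%:R^-1 *: \sum_(x <- vs) (L ^ M) *: x.

Definition rotation (c : pt) (a b : R) (z : pt) : pt :=
  c + (a * (z.1 - c.1) - b * (z.2 - c.2), b * (z.1 - c.1) + a * (z.2 - c.2)).

Definition rotations_M (M : int) : set (pt -> pt) :=
  [set rho | exists a b : R,
     [/\ a ^+ 2 + b ^+ 2 = 1, rho = rotation (barycenter M) a b &
         rho @` VMM M = VMM M]].

Definition good_labelling (M : int) (l : pt -> 'I_(size vs)) : Prop :=
  [/\ (forall x y, VMM M x -> VMM M y -> l x = l y -> x = y),
      (forall a, exists x, VMM M x /\ l x = a) &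
      (forall s, complex_shift M s ->
         exists rho, rotations_M M rho /\
           forall v, complex_vertices M s v -> l v = l (rho (v - s)))].

Definition good_labelling_property : Prop :=
  exists (M : int) (l : pt -> 'I_(size vs)), good_labelling M l.

End NestedFractal.

(* The symmetry axiom, applied to the bisector of each pair of essential fixed points,
   makes x0, x1, x2 an equilateral triangle; let Lat be the lattice Z(x1 - x0) + Z(x2 - x0).
   Consecutive 1-cells of a connectivity chain meet in essential fixed points (nesting),
   and Psi_i x = Psi_j y means L nu_j - L nu_i = x - y; walking along a chain from
   nu_0 = 0 shows that every L nu_i lies in Lat.  As L x - x = L nu_i when Psi_i x = x,
   Lat is stable under multiplication by L, so every 0-complex is a translate of K^<0> by
   a vector of Lat.  Label x0 + a (x1 - x0) + b (x2 - x0) by a - b mod 3: translating by a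
   lattice vector adds a constant to the labels of the three vertices, and adding 0, 1 or
   2 to the labels 0, 1, 2 of x0, x1, x2 is realised by the rotation about the centroid
   by 0, 120 or 240 degrees. *)

From mathcomp Require Import all_boot all_algebra.
From mathcomp Require Import all_classical all_reals all_analysis.
From mathcomp Require Import ring lra.
Set Implicit Arguments.
Unset Strict Implicit.
Unset Printing Implicit Defensive.
Import GRing.Theory Num.Theory.
Local Open Scope classical_set_scope.
Local Open Scope ring_scope.

Section PlaneGeometry.
Variable R : realType.
Notation pt := (R * R)%type.
Implicit Types p q x y z : pt.

Lemma pt_ext p q : p.1 = q.1 -> p.2 = q.2 -> p = q.
Proof. by case: p q => [? ?] [? ?] /= -> ->. Qed.

Lemma scalerRE (a b : R) : a *: b = a * b.
Proof. by []. Qed.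

Definition sqdist p q : R := dotp (p - q) (p - q).

Definition cross p q : R := p.1 * q.2 - p.2 * q.1.

Lemma sqdistC p q : sqdist p q = sqdist q p.
Proof. by case: p q => [? ?] [? ?]; rewrite /sqdist /dotp /=; ring. Qed.

Lemma sqdist_eq0 p q : sqdist p q = 0 -> p = q.
Proof.
case: p q => [a b] [c d]; rewrite /sqdist /dotp /= -!expr2 => /eqP.
rewrite paddr_eq0 ?sqr_ge0 // !sqrf_eq0 !subr_eq0 => /andP[/eqP-> /eqP->] //.
Qed.

Lemma sqdist_reflection_l x y z :
  x <> y -> sqdist (bisector_reflection x y z) x = sqdist z y.
Proof.
move=> nxy; have : sqdist y x != 0 by apply/eqP => /sqdist_eq0/esym.
rewrite /sqdist /bisector_reflection /dotp.
case: x y z {nxy} => [x1 x2] [y1 y2] [z1 z2] /= nz.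
by rewrite !scalerRE; field.
Qed.

Lemma sqdist_reflection_r x y z :
  x <> y -> sqdist (bisector_reflection x y z) y = sqdist z x.
Proof.
move=> nxy; have : sqdist y x != 0 by apply/eqP => /sqdist_eq0/esym.
rewrite /sqdist /bisector_reflection /dotp.
case: x y z {nxy} => [x1 x2] [y1 y2] [z1 z2] /= nz.
by rewrite !scalerRE; field.
Qed.

Lemma sqdistxx x : sqdist x x = 0.
Proof. by rewrite /sqdist subrr /dotp /= mulr0 addr0. Qed.

Lemma rotation10 (c : pt) : rotation c 1 0 = id.
Proof. by apply/funext => z; apply: pt_ext => /=; ring. Qed.

Definition perp p : pt := (- p.2, p.1).

Section EquilateralVectors.
Variables (u v : pt) (S : R).
Hypotheses (hu : dotp u u = S) (hv : dotp v v = S) (huv : dotp (v - u) (v - u) = S).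

Lemma dotp_equilateral : dotp u v = S / 2.
Proof.
move: hu hv huv; case: u v => [u1 u2] [v1 v2]; rewrite /dotp /= => hu' hv' huv'.
transitivity ((u1 * u1 + u2 * u2 + (v1 * v1 + v2 * v2)
               - ((v1 - u1) * (v1 - u1) + (v2 - u2) * (v2 - u2))) / 2); first by field.
by rewrite hu' hv' huv'; field.
Qed.

Lemma cross_sqr_equilateral : cross u v ^+ 2 = 3 / 4 * S ^+ 2.
Proof.
have := dotp_equilateral; move: hu hv.
case: u v => [u1 u2] [v1 v2]; rewrite /dotp /cross /= => hu' hv' hdot.
transitivity ((u1 * u1 + u2 * u2) * (v1 * v1 + v2 * v2) - (u1 * v1 + u2 * v2) ^+ 2).
  by ring.
by rewrite hu' hv' hdot; field.
Qed.

Lemma cross_perp_equilateral : cross u v *: perp (u + v) = (3 / 2 * S) *: (v - u).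
Proof.
have := dotp_equilateral; move: hu hv.
case: u v => [u1 u2] [v1 v2]; rewrite /dotp /cross /perp /= => hu' hv' hdot.
apply: pt_ext => /=; rewrite !scalerRE.
- transitivity ((u1 * v1 + u2 * v2) * (v1 - u1) + (u1 * u1 + u2 * u2) * v1
                - (v1 * v1 + v2 * v2) * u1); first by ring.
  by rewrite hu' hv' hdot; field.
- transitivity ((u1 * v1 + u2 * v2) * (v2 - u2) + (u1 * u1 + u2 * u2) * v2
                - (v1 * v1 + v2 * v2) * u2); first by ring.
  by rewrite hu' hv' hdot; field.
Qed.

(* Relative to the centre, c is -(u + v)/3; the rotation maps it to
   (u + v)/6 - cross u v perp (u + v)/(3 S), which cross_perp_equilateral turns into
   (2u - v)/3, the position of c + u. *)
Lemma rotation_equilateral (c : pt) : S != 0 ->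
  rotation (c + 3^-1 *: (u + v)) (- 2^-1) (cross u v / S) c = c + u.
Proof.
move=> S_neq0; have := cross_perp_equilateral.
case: c u v => [c1 c2] [u1 u2] [v1 v2].
rewrite /cross /perp /= => -[e1 e2]; rewrite !scalerRE in e1 e2.
rewrite /rotation; apply: pt_ext => /=; rewrite !scalerRE.
- transitivity (c1 + u1 - ((u1 * v2 - u2 * v1) * - (u2 + v2)
                             - 3 / 2 * S * (v1 - u1)) / (3 * S)); first by field.
  by rewrite e1 subrr mul0r subr0.
- transitivity (c2 + u2 - ((u1 * v2 - u2 * v1) * (u1 + v1)
                             - 3 / 2 * S * (v2 - u2)) / (3 * S)); first by field.
  by rewrite e2 subrr mul0r subr0.
Qed.

End EquilateralVectors.

Definition equilateral y0 y1 y2 : Prop :=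
  [/\ y0 <> y1, sqdist y0 y1 = sqdist y1 y2 & sqdist y1 y2 = sqdist y2 y0].

Definition centroid y0 y1 y2 : pt := 3^-1 *: (y0 + y1 + y2).

Definition third_turn y0 y1 y2 : pt -> pt :=
  rotation (centroid y0 y1 y2) (- 2^-1) (cross (y1 - y0) (y2 - y0) / sqdist y0 y1).

Section Equilateral.
Variables y0 y1 y2 : pt.
Hypothesis eqy : equilateral y0 y1 y2.

Lemma equilateral_rot : equilateral y1 y2 y0.
Proof.
case: eqy => y01 e01 e12; split=> //; last by rewrite -e12.
by move=> y12; apply: y01; apply: sqdist_eq0; rewrite e01 y12 sqdistxx.
Qed.

Lemma equilateral_swap : equilateral y0 y2 y1.
Proof.
case: eqy => y01 e01 e12; split; rewrite ?[sqdist y2 y1]sqdistC.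
- by move=> y02; apply: y01; apply: sqdist_eq0; rewrite e01 e12 -y02 sqdistxx.
- by rewrite e12 sqdistC.
- by rewrite -e01 sqdistC.
Qed.

Lemma sqdist_equilateral_neq0 : sqdist y0 y1 != 0.
Proof. by case: eqy => y01 _ _; apply/eqP => /sqdist_eq0. Qed.

Lemma equilateral_vectors :
  [/\ dotp (y1 - y0) (y1 - y0) = sqdist y0 y1,
      dotp (y2 - y0) (y2 - y0) = sqdist y0 y1 &
      dotp ((y2 - y0) - (y1 - y0)) ((y2 - y0) - (y1 - y0)) = sqdist y0 y1].
Proof.
case: eqy => _ e01 e12; rewrite opprB addrA subrK.
by split; [exact: sqdistC | rewrite e01 e12 | rewrite e01 sqdistC].
Qed.

Lemma cross_equilateral_neq0 : cross (y1 - y0) (y2 - y0) != 0.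
Proof.
case: equilateral_vectors => hu hv huv.
rewrite -sqrf_eq0 (cross_sqr_equilateral hu hv huv) mulf_eq0 sqrf_eq0.
by rewrite negb_or sqdist_equilateral_neq0 andbT; apply/eqP; lra.
Qed.

Lemma third_turn_normed :
  (- 2^-1) ^+ 2 + (cross (y1 - y0) (y2 - y0) / sqdist y0 y1) ^+ 2 = 1 :> R.
Proof.
case: equilateral_vectors => hu hv huv.
rewrite expr_div_n (cross_sqr_equilateral hu hv huv).
by field; rewrite sqdist_equilateral_neq0.
Qed.

Lemma third_turn_first : third_turn y0 y1 y2 y0 = y1.
Proof.
case: equilateral_vectors => hu hv huv; rewrite /third_turn.
have -> : centroid y0 y1 y2 = y0 + 3^-1 *: ((y1 - y0) + (y2 - y0)).
  by apply: pt_ext => /=; rewrite !scalerRE; field.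
rewrite (rotation_equilateral hu hv huv) ?sqdist_equilateral_neq0 //.
exact: subrKC.
Qed.

Lemma third_turn_rot : third_turn y1 y2 y0 = third_turn y0 y1 y2.
Proof.
case: eqy => _ e01 _; rewrite /third_turn /centroid -e01 addrC addrA.
congr (rotation _ _ (_ / _)).
by case: y0 y1 y2 => [? ?] [? ?] [? ?]; rewrite /cross /=; ring.
Qed.

End Equilateral.

Lemma third_turn_cycle y0 y1 y2 : equilateral y0 y1 y2 ->
  [/\ third_turn y0 y1 y2 y0 = y1, third_turn y0 y1 y2 y1 = y2 &
      third_turn y0 y1 y2 y2 = y0].
Proof.
move=> eqy; have eqy1 := equilateral_rot eqy; have eqy2 := equilateral_rot eqy1.
split; first exact: third_turn_first.
- by rewrite -(third_turn_rot eqy) third_turn_first.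
- by rewrite -(third_turn_rot eqy) -(third_turn_rot eqy1) third_turn_first.
Qed.

End PlaneGeometry.

Lemma subgroup_closedD (V : zmodType) (P : set V) :
  P 0 -> (forall p q, P p -> P q -> P (p - q)) -> forall p q, P p -> P q -> P (p + q).
Proof.
move=> P0 PB p q Pp Pq.
have PN r : P r -> P (- r) by move=> Pr; rewrite -sub0r; apply: PB.
by rewrite -[q]opprK; apply: PB => //; apply: PN.
Qed.

Lemma perm_set_seq (T : eqType) (s t : seq T) : perm_eq s t -> [set` s] = [set` t].
Proof. by move=> /perm_mem st; apply/seteqP; split => x /=; rewrite st. Qed.

Section Symmetry.
Variable R : realType.
Notation pt := (R * R)%type.
Variables (L : R) (N : nat) (nu : nat -> pt).

Lemma Vn0 (V0 : set pt) : Vn L N nu V0 0 = V0.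
Proof.
apply/seteqP; split => [z [w [[/size0nil -> _] [x [V0x ->]]]] // | z V0z].
by exists [::]; split => //; exists z.
Qed.

Lemma symmetry_equidistant (x y z : pt) :
  symmetry L N nu [set` [:: x; y; z]] -> uniq [:: x; y; z] -> sqdist z x = sqdist z y.
Proof.
move=> sym; rewrite /= !inE !negb_or andbT => /andP[/andP[/eqP xy /eqP xz] /eqP yz].
have := sym x y; rewrite /= !inE !eqxx orbT => /(_ erefl erefl xy 0%N).
rewrite Vn0 => refl_V0.
have : [set` [:: x; y; z]] (bisector_reflection x y z).
  by rewrite -refl_V0; exists z => //=; rewrite !inE eqxx !orbT.
rewrite /= !inE => /or3P[] /eqP rz.
- by have := sqdist_reflection_l z xy; rewrite rz sqdistxx => /esym/sqdist_eq0/esym/yz.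
- by have := sqdist_reflection_r z xy; rewrite rz sqdistxx => /esym/sqdist_eq0/esym/xz.
- by rewrite -(sqdist_reflection_l z xy) rz.
Qed.

Lemma symmetry_equilateral (x0 x1 x2 : pt) :
  symmetry L N nu [set` [:: x0; x1; x2]] -> uniq [:: x0; x1; x2] ->
  equilateral x0 x1 x2.
Proof.
move=> sym uniq_x; have x2_equi := symmetry_equidistant sym uniq_x.
have x01 : x0 != x1 by move: uniq_x; rewrite /= !inE => /andP[/norP[]].
have x0_equi : sqdist x0 x1 = sqdist x0 x2.
  have rot_x : [set` [:: x1; x2; x0]] = [set` [:: x0; x1; x2]] :=
    perm_set_seq (permEl (perm_rot 1 [:: x0; x1; x2])).
  by apply: symmetry_equidistant; rewrite ?rot_x // -(rot_uniq 2).
split; first exact/eqP.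
- by rewrite x0_equi sqdistC x2_equi sqdistC.
- by rewrite sqdistC -x2_equi sqdistC.
Qed.

End Symmetry.

Section Lattice.
Variable R : realType.
Notation pt := (R * R)%type.
Variables d1 d2 : pt.

Definition lattice : set pt :=
  [set p | exists a b : int, p = a%:~R *: d1 + b%:~R *: d2].

Lemma lattice0 : lattice 0.
Proof. by exists 0%Z, 0%Z; rewrite !scale0r addr0. Qed.

Lemma latticeB p q : lattice p -> lattice q -> lattice (p - q).
Proof.
move=> [a [b ->]] [a' [b' ->]]; exists (a - a')%Z, (b - b')%Z.
by rewrite !intrB !scalerBl opprD addrACA.
Qed.

Lemma latticeD p q : lattice p -> lattice q -> lattice (p + q).
Proof. by apply: subgroup_closedD; [exact: lattice0 | exact: latticeB]. Qed.

Lemma lattice_d1 : lattice d1.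
Proof. by exists 1%Z, 0%Z; rewrite scale0r addr0 scale1r. Qed.

Lemma lattice_d2 : lattice d2.
Proof. by exists 0%Z, 1%Z; rewrite scale0r add0r scale1r. Qed.

Lemma lattice_scale (c : R) : lattice (c *: d1) -> lattice (c *: d2) ->
  forall p, lattice p -> lattice (c *: p).
Proof.
move=> Lcd1 Lcd2 p [a [b ->]].
rewrite scalerDr !scalerA ![c * _]mulrC -!scalerA.
have Lz (k : int) q : lattice q -> lattice (k%:~R *: q).
  by move=> [a' [b' ->]]; exists (k * a')%Z, (k * b')%Z; rewrite scalerDr !scalerA !intrM.
by apply: latticeD; apply: Lz.
Qed.

Hypothesis d12 : cross d1 d2 != 0.

(* Cramer's rule recovers the integer coordinates of a lattice point, so the floors are
   exact there; off the lattice the label is junk. *)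
Definition lattice_label (p : pt) : 'Z_3 :=
  (Num.floor (cross p d2 / cross d1 d2))%:~R - (Num.floor (cross d1 p / cross d1 d2))%:~R.

Lemma lattice_labelE (a b : int) :
  lattice_label (a%:~R *: d1 + b%:~R *: d2) = a%:~R - b%:~R.
Proof.
rewrite /lattice_label.
have [-> ->] : cross (a%:~R *: d1 + b%:~R *: d2) d2 / cross d1 d2 = a%:~R /\
               cross d1 (a%:~R *: d1 + b%:~R *: d2) / cross d1 d2 = b%:~R.
  by move: d12; case: d1 d2 => [? ?] [? ?]; rewrite /cross /= !scalerRE => ?; split; field.
by rewrite !intrKfloor.
Qed.

Lemma lattice_labelD p q : lattice p -> lattice q ->
  lattice_label (p + q) = lattice_label p + lattice_label q.
Proof.
move=> [a [b ->]] [a' [b' ->]].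
rewrite addrACA -!scalerDl -!intrD !lattice_labelE !intrD.
by rewrite opprD addrACA.
Qed.

End Lattice.

Section NestedFractalShifts.
Variable R : realType.
Notation pt := (R * R)%type.
Variables (L : R) (N : nat) (nu : nat -> pt) (K : set pt).
Notation V0 := (essential_fixed_points L N nu).
Hypothesis L_neq0 : L != 0.

Lemma Psi_eq_shift i j x y :
  Psi L nu i x = Psi L nu j y -> L *: nu j = L *: nu i + (x - y).
Proof.
move=> /(congr1 (fun p => L *: p)); rewrite /Psi !scalerDr !scalerA mulfV // !scale1r.
by move=> e; rewrite addrA (addrC _ x) e (addrC y) addrK.
Qed.

Lemma essential_fixed_point_shift x :
  V0 x -> exists2 i, (i < N)%N & L *: nu i = L *: x - x.
Proof.
move=> [[i [iN Psi_x]] _]; exists i => //.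
by rewrite -[in L *: x]Psi_x /Psi scalerDr scalerA mulfV // scale1r addrAC subrr add0r.
Qed.

Lemma cells_meet_in_vertices i j : nesting L N nu K V0 ->
  (i < N)%N -> (j < N)%N -> i != j -> (Psi L nu i @` K `&` Psi L nu j @` K) !=set0 ->
  exists x y, [/\ V0 x, V0 y & Psi L nu i x = Psi L nu j y].
Proof.
move=> nest iN jN ij [p Kp].
have wi : word N 1 [:: i] by split => //=; rewrite iN.
have wj : word N 1 [:: j] by split => //=; rewrite jN.
have ij' : [:: i] <> [:: j] by case=> /eqP; rewrite (negbTE ij).
have : (psiw L nu [:: i] @` V0 `&` psiw L nu [:: j] @` V0) p.
  by rewrite -(nest _ _ _ wi wj ij').
by case=> -[x V0x <-] [y V0y e]; exists x, y.
Qed.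

Variable P : set pt.
Hypotheses (P0 : P 0) (PB : forall p q, P p -> P q -> P (p - q)).
Let PD := subgroup_closedD P0 PB.

Hypothesis PV0 : forall x y, V0 x -> V0 y -> P (x - y).

Lemma scaled_nu_closed : nesting L N nu K V0 -> connectivity L N nu K ->
  nu 0%N = 0 -> (0 < N)%N -> forall i, (i < N)%N -> P (L *: nu i).
Proof.
move=> nest conn nu0 N_gt0 i iN.
have [m [c [c0 <- cN meet]]] := conn 0%N i N_gt0 iN.
suff : forall l, (l <= m)%N -> P (L *: nu (c l)) by apply.
elim=> [|l IH] lm; first by rewrite c0 nu0 scaler0.
have [<- | cl] := eqVneq (c l) (c l.+1); first exact/IH/ltnW.
have [x [y [V0x V0y /Psi_eq_shift ->]]] :=
  cells_meet_in_vertices nest (cN l (ltnW lm)) (cN l.+1 lm) cl (meet l lm).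
by apply: PD; [apply/IH/ltnW | apply: PV0].
Qed.

Lemma scaled_difference_closed x y : (forall i, (i < N)%N -> P (L *: nu i)) ->
  V0 x -> V0 y -> P (L *: (x - y)).
Proof.
move=> Pnu V0x V0y.
have [i iN ex] := essential_fixed_point_shift V0x.
have [j jN ey] := essential_fixed_point_shift V0y.
have -> : L *: (x - y) = (L *: x - x) - (L *: y - y) + (x - y).
  by apply: pt_ext => /=; rewrite !scalerRE; ring.
by rewrite -ex -ey; apply: PD; [apply: PB; apply: Pnu | apply: PV0].
Qed.

Hypothesis PZ : forall p, P p -> P (L *: p).

Lemma complex_shift0_closed s : (forall i, (i < N)%N -> P (L *: nu i)) ->
  complex_shift L N nu 0 s -> P s.
Proof.
move=> Pnu [m [w [_ wN ->]]]; apply: (big_ind P P0 PD) => n _.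
have PZn k p : P p -> P (L ^+ k *: p).
  by elim: k p => [|k IH] p Pp; rewrite ?expr0 ?scale1r // exprSr -scalerA; apply/IH/PZ.
by rewrite add0r -intS -exprnP exprSr -scalerA; apply/PZn/Pnu/wN.
Qed.

End NestedFractalShifts.

Section TriangleLabelling.
Variable R : realType.
Notation pt := (R * R)%type.
Variables (L : R) (N : nat) (nu : nat -> pt).

Lemma VMM0 (vs : seq pt) : VMM L vs 0 = [set` vs].
Proof.
rewrite /VMM expr0z; apply/seteqP; split => [y [x Vx <-] | y Vy].
- by rewrite scale1r.
- by exists y; rewrite ?scale1r.
Qed.

Lemma rotations_M_perm (vs ws : seq pt) (M : int) : perm_eq vs ws ->
  rotations_M L vs M = rotations_M L ws M.
Proof.
move=> vsws; rewrite /rotations_M /VMM /barycenter /V0s.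
by rewrite (perm_size vsws) (perm_big _ vsws) (perm_set_seq vsws).
Qed.

Lemma rotations_M_id (vs : seq pt) (M : int) :
  rotations_M L vs M (rotation (barycenter L vs M) 1 0).
Proof.
by exists 1, 0; rewrite rotation10 expr1n expr0n addr0 image_id.
Qed.

Lemma third_turn_rotations_M (y0 y1 y2 : pt) : equilateral y0 y1 y2 ->
  rotations_M L [:: y0; y1; y2] 0 (third_turn y0 y1 y2).
Proof.
move=> eqy; have [t0 t1 t2] := third_turn_cycle eqy; rewrite /rotations_M.
have -> : barycenter L [:: y0; y1; y2] 0 = centroid y0 y1 y2.
  by rewrite /barycenter /centroid !big_cons big_nil expr0z !scale1r addr0 addrA.
exists (- 2^-1), (cross (y1 - y0) (y2 - y0) / sqdist y0 y1).
split; [exact: third_turn_normed | by [] |].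
rewrite VMM0; apply/seteqP; split => [_ [x + <-] | y].
- by rewrite /= !inE => /or3P[]/eqP->; rewrite ?t0 ?t1 ?t2 !eqxx ?orbT.
- rewrite /= !inE => /or3P[]/eqP->; [exists y2 | exists y0 | exists y1];
    by rewrite /= ?inE ?eqxx ?orbT.
Qed.

Variables x0 x1 x2 : pt.
Hypothesis eqx : equilateral x0 x1 x2.
Notation vs := [:: x0; x1; x2].
Notation d1 := (x1 - x0).
Notation d2 := (x2 - x0).

Lemma triangle_lattice_diff x y : x \in vs -> y \in vs -> lattice d1 d2 (x - y).
Proof.
have Lx z : z \in vs -> lattice d1 d2 (z - x0).
  rewrite !inE => /or3P[]/eqP->; rewrite ?subrr;
    [exact: lattice0 | exact: lattice_d1 | exact: lattice_d2].
move=> /Lx Lx' /Lx Ly; have -> : x - y = (x - x0) - (y - x0) by rewrite opprB subrKA.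
exact: latticeB.
Qed.

Definition triangle_label (v : pt) : 'Z_3 := lattice_label d1 d2 (v - x0).

Lemma triangle_label_vertices :
  [/\ triangle_label x0 = 0, triangle_label x1 = 1 & triangle_label x2 = -1].
Proof.
have d12 := cross_equilateral_neq0 eqx.
have lab a b : triangle_label (x0 + (a%:~R *: d1 + b%:~R *: d2)) = a%:~R - b%:~R.
  by rewrite /triangle_label addrAC subrr add0r lattice_labelE.
split.
- by have := lab 0%Z 0%Z; rewrite !scale0r !addr0 subrr.
- by have := lab 1%Z 0%Z; rewrite scale0r scale1r addr0 subrKC subr0.
- by have := lab 0%Z 1%Z; rewrite scale0r scale1r add0r subrKC sub0r.
Qed.

Lemma triangle_labelD v s : v \in vs -> lattice d1 d2 s ->
  triangle_label (v + s) = triangle_label v + lattice_label d1 d2 s.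
Proof.
move=> vsv Ls; have Lv := triangle_lattice_diff vsv (mem_head _ _).
by rewrite /triangle_label addrAC (lattice_labelD (cross_equilateral_neq0 eqx) Lv Ls).
Qed.

Lemma triangle_label_rotation (k : 'Z_3) : exists2 rho, rotations_M L vs 0 rho &
  forall x, x \in vs -> triangle_label (rho x) = triangle_label x + k.
Proof.
have [l0 l1 l2] := triangle_label_vertices.
case: k => -[|[|[|//]]] k3.
- exists (rotation (barycenter L vs 0) 1 0); first exact: rotations_M_id.
  move=> x _; rewrite (_ : Ordinal k3 = 0); last exact: val_inj.
  by rewrite rotation10 addr0.
- exists (third_turn x0 x1 x2); first exact: third_turn_rotations_M.
  have [t0 t1 t2] := third_turn_cycle eqx.
  by move=> x; rewrite !inE => /or3P[]/eqP->; rewrite ?t0 ?t1 ?t2 ?l0 ?l1 ?l2; apply: val_inj.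
- exists (third_turn x0 x2 x1).
    have swap : perm_eq [:: x0; x2; x1] vs by rewrite perm_cons (perm_catC [:: x2]).
    rewrite -(rotations_M_perm _ swap).
    exact/third_turn_rotations_M/equilateral_swap.
  have [t0 t2 t1] := third_turn_cycle (equilateral_swap eqx).
  by move=> x; rewrite !inE => /or3P[]/eqP->; rewrite ?t0 ?t1 ?t2 ?l0 ?l1 ?l2; apply: val_inj.
Qed.

Hypothesis shifts_lattice : forall s, complex_shift L N nu 0 s -> lattice d1 d2 s.

Lemma good_labelling_triangle : @good_labelling _ L N nu vs 0 triangle_label.
Proof.
have [l0 l1 l2] := triangle_label_vertices.
rewrite /good_labelling VMM0; split.
- move=> x y; rewrite /= !inE => /or3P[]/eqP-> /or3P[]/eqP->;
    by rewrite ?l0 ?l1 ?l2 // => /(congr1 val).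
- case=> -[|[|[|//]]] a3; [exists x0 | exists x1 | exists x2];
    by rewrite /= ?inE ?eqxx ?orbT ?l0 ?l1 ?l2; split=> //; apply: val_inj.
move=> s /shifts_lattice Ls.
have [rho rhoM rho_label] := triangle_label_rotation (lattice_label d1 d2 s).
exists rho; split=> // _ [x vsx <-].
by rewrite expr0z scale1r addrK triangle_labelD // rho_label.
Qed.

End TriangleLabelling.

Theorem theorem3p11 (R : realType) (L : R) (N : nat) (nu : nat -> (R * R)%type)
    (K : set (R * R)) (vs : seq (R * R)) :
  planar_simple_nested_fractal L N nu K ->
  uniq vs -> [set` vs] = essential_fixed_points L N nu ->
  size vs = 3%N ->
  good_labelling_property L N nu vs.
Proof.
move=> [[L_gt1 N_ge2 nu0 _] [_ nest sym conn]] + V0E.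
case: vs V0E => [|x0 [|x1 [|x2 [|? ?]]]] // V0E uniq_x _.
have L_neq0 : L != 0 by lra.
pose Lat := lattice (x1 - x0) (x2 - x0).
have Lat0 : Lat 0 := lattice0 _ _.
have LatB : forall p q, Lat p -> Lat q -> Lat (p - q) := @latticeB _ _ _.
have V0x x : x \in [:: x0; x1; x2] -> essential_fixed_points L N nu x by rewrite -V0E.
have LatV0 x y : essential_fixed_points L N nu x -> essential_fixed_points L N nu y ->
    Lat (x - y) by rewrite -V0E; exact: triangle_lattice_diff.
have Lat_nu := scaled_nu_closed L_neq0 Lat0 LatB LatV0 nest conn nu0 (ltnW N_ge2).
have Lat_scale : forall p, Lat p -> Lat (L *: p).
  by apply: lattice_scale; apply: (scaled_difference_closed L_neq0 Lat0 LatB LatV0 Lat_nu);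
    apply: V0x; rewrite !inE eqxx ?orbT.
have Lat_shifts s : complex_shift L N nu 0 s -> Lat s.
  exact: complex_shift0_closed Lat0 LatB Lat_scale _ Lat_nu.
rewrite -V0E in sym; exists 0%Z, (triangle_label x0 x1 x2).
exact: good_labelling_triangle (symmetry_equilateral sym uniq_x) Lat_shifts.
Qed.
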